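(* Let $M$ be a real symmetric $n\times n$ matrix with $\mathrm{Trace}(M)\ge 0$, and write $\det(xI-M)=\sum_{k=0}^n a_kx^k$. Suppose $M$ has exactly one positive eigenvalue, $r-1$ negative eigenvalues and $n-r$ zero eigenvalues (counted with multiplicity), where $2\le r\le n$. If $\mathrm{Trace}(M)=0$, then $a_k<0$ for $n-r\le k\le n-2$; if $\mathrm{Trace}(M)>0$, then $a_k<0$ for $n-r\le k\le n-1$. *)

From HB Require Import structures.
From mathcomp Require Import all_boot all_order all_algebra.
From mathcomp Require Import reals.
Set Implicit Arguments.
Unset Strict Implicit.
Unset Printing Implicit Defensive.

From HB Require Import structures.
From mathcomp Require Import all_boot all_order all_algebra.
From mathcomp Require Import reals.
From mathcomp Require Import ring zify.
Import Order.TTheory GRing.Theory Num.Theory.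
Local Open Scope ring_scope.

(* Splitting off the zero eigenvalues, char_poly M = X^(n-r) p with
   p = (X - lam) * prod_{x < 0} (X - x), whose second-highest coefficient is
   -(lam + sum x) = - tr M.  The heart is that p has negative coefficients in
   degrees below r - 1 whenever its roots sum to a nonnegative number: writing
   l = y :: l', the identity
     (X - lam)(X - y) q = (X - y) (X - (lam + y)) q + y (X - y) q
   lets an induction on l move the negative root y into the distinguished one,
   the first summand having nonpositive and the second negative low-degree
   coefficients. *)

Lemma coefXsubCM (R : nzRingType) (c : R) (p : {poly R}) m :
  (('X - c%:P) * p)`_m = (if m is m'.+1 then p`_m' else 0) - c * p`_m.
Proof. by rewrite mulrBl coefB coefXM coefCM; case: m. Qed.

Section NegativeRoots.

Variable R : numDomainType.

Lemma coef_prod_XsubC_gt0 (l : seq R) m :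
  {in l, forall x, x < 0} -> (m <= size l)%N ->
  0 < (\prod_(x <- l) ('X - x%:P))`_m.
Proof.
elim: l m => [|y l IHl] m l_neg; first by rewrite leqn0 big_nil => /eqP->; rewrite coef1.
have y_neg : y < 0 by apply: l_neg; rewrite mem_head.
have {}l_neg : {in l, forall x, x < 0} by move=> x xl; apply: l_neg; rewrite inE xl orbT.
set q := \prod_(x <- l) ('X - x%:P).
have q_ge0 j : 0 <= q`_j.
  have [/(IHl _ l_neg)/ltW //|lt_l_j] := leqP j (size l).
  by rewrite nth_default // size_prod_XsubC.
rewrite big_cons coefXsubCM -mulNr; case: m => [|m] /= m_le.
  by rewrite add0r mulr_gt0 ?oppr_gt0 ?IHl.
by apply: (lt_le_trans (IHl _ l_neg m_le)); rewrite lerDl mulr_ge0 ?q_ge0 // oppr_ge0 ltW.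
Qed.

Lemma coef_prod_XsubC_lt0 (lam : R) (l : seq R) m :
  {in l, forall x, x < 0} -> 0 <= lam + \sum_(x <- l) x -> (m < size l)%N ->
  (\prod_(x <- lam :: l) ('X - x%:P))`_m < 0.
Proof.
elim: l lam m => [//|y l IHl] lam m l_neg sum_ge0 m_lt.
have y_neg : y < 0 by apply: l_neg; rewrite mem_head.
have tail_neg : {in l, forall x, x < 0} by move=> x xl; apply: l_neg; rewrite inE xl orbT.
set f := \prod_(x <- (lam + y) :: l) ('X - x%:P).
set q := \prod_(x <- y :: l) ('X - x%:P).
have shift_root : \prod_(x <- lam :: y :: l) ('X - x%:P) = ('X - y%:P) * f + y%:P * q.
  by rewrite /f /q !big_cons polyCD; ring.
have sum_ge0' : 0 <= lam + y + \sum_(x <- l) x by move: sum_ge0; rewrite big_cons addrA.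
have f_le0 j : (j <= size l)%N -> f`_j <= 0.
  rewrite leq_eqVlt => /predU1P[->|lt_j_l]; last exact/ltW/IHl.
  by rewrite -[size l]/((size ((lam + y) :: l)).-1) coefPn_prod_XsubC // big_cons oppr_le0.
have low_le0 : (if m is m'.+1 then f`_m' else 0) - y * f`_m <= 0.
  rewrite -mulNr -[leRHS]addr0 lerD //; last by rewrite mulr_ge0_le0 ?f_le0 // oppr_ge0 ltW.
  by case: m m_lt => // m m_lt; apply: f_le0; rewrite -ltnS ltnW.
rewrite shift_root coefD coefXsubCM coefCM -[ltRHS]addr0 ler_ltD //.
by rewrite nmulr_rlt0 // coef_prod_XsubC_gt0 // ltnW.
Qed.

End NegativeRoots.

Lemma prod_XsubC_sign_split (R : realDomainType) (s : seq R) :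
  \prod_(x <- s) ('X - x%:P) = 'X^(count (fun x => x == 0) s) *
    \prod_(x <- [seq x <- s | 0 < x] ++ [seq x <- s | x < 0]) ('X - x%:P).
Proof.
rewrite (bigID (fun x => x == 0)) /= big_cat !big_filter.
rewrite [X in _ * X](bigID (fun x => 0 < x)) /=; congr (_ * (_ * _)).
2,3: by apply: eq_bigl => x; case: ltrgt0P.
rewrite (eq_bigr (fun=> 'X)) => [|x /eqP->]; last by rewrite subr0.
by rewrite big_const_seq iter_mulr_1.
Qed.

Theorem theorem2p2 (R : realType) (n r : nat) (M : 'M[R]_n) (s : seq R) :
  M^T = M ->
  0 <= \tr M ->
  (2 <= r <= n)%N ->
  char_poly M = \prod_(x <- s) ('X - x%:P) ->
  count (fun x => 0 < x) s = 1%N ->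
  count (fun x => x < 0) s = (r - 1)%N ->
  count (fun x => x == 0) s = (n - r)%N ->
  (\tr M = 0 -> forall k : nat, (n - r <= k <= n - 2)%N -> (char_poly M)`_k < 0) /\
  (0 < \tr M -> forall k : nat, (n - r <= k <= n - 1)%N -> (char_poly M)`_k < 0).
Proof.
move=> _ tr_ge0 /andP[r_ge2 r_le_n] charM one_pos n_neg n_zero.
have [lam pos_s] : exists lam, [seq x <- s | 0 < x] = [:: lam].
  move: (size_filter (fun x => 0 < x) s); rewrite one_pos.
  by case: [seq x <- s | 0 < x] => [|a [|]] //; exists a.
set l := [seq x <- s | x < 0].
have l_neg : {in l, forall x, x < 0} by move=> x; rewrite mem_filter => /andP[].
have size_l : size l = (r - 1)%N by rewrite size_filter.
have coef_char k : (n - r <= k)%N ->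
    (char_poly M)`_k = (\prod_(x <- lam :: l) ('X - x%:P))`_(k - (n - r)).
  by rewrite charM prod_XsubC_sign_split pos_s n_zero coefXnM ltnNge => ->.
have trM : \tr M = lam + \sum_(x <- l) x.
  have /eqP := char_poly_trace M (leq_trans (ltnW r_ge2) r_le_n).
  rewrite coef_char; last by lia.
  have -> : (n.-1 - (n - r) = (size (lam :: l)).-1)%N by rewrite /= size_l; lia.
  by rewrite coefPn_prod_XsubC // big_cons eqr_opp => /eqP.
have coef_low_lt0 k : (n - r <= k <= n - 2)%N -> (char_poly M)`_k < 0.
  move=> /andP[k_ge k_le]; rewrite coef_char // coef_prod_XsubC_lt0 // -?trM //.
  by rewrite size_l; lia.
split=> // tr_gt0 k /andP[k_ge k_le].
have [k_lt|k_ge'] := ltnP k (n - 1); first by rewrite coef_low_lt0 // k_ge; lia.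
have -> : k = n.-1 by lia.
by rewrite char_poly_trace ?oppr_lt0 //; lia.
Qed.
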